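(* Let $\omega$ be a Poisson point process on $\mathbb{R}^2$ with intensity $1$ (law $\mathbb{P}$). Let $\xi$ be the exponent of transversal fluctuations (defined in the context), let $\gamma\in(\xi,1)$, $b\in(\gamma,1)$, and let $N$ be such that $N^b-4N^\gamma>0$. Let $\mathbf{v}_1=(1/\sqrt2,1/\sqrt2)$, $\mathbf{v}_2=(-1/\sqrt2,1/\sqrt2)$, $m_N=3N^\gamma\mathbf{v}_2$, and let $C_2=C(\gamma,N)+m_N$, where $C(\gamma,N)=\{(x,y)\,;\,0\le x+y\le 2N,\ -\sqrt{2}N^{\gamma}\le -x+y\le \sqrt{2}N^{\gamma}\}$. Let $A=(N^b+2N^\gamma)\mathbf{v}_1+2N^\gamma\mathbf{v}_2$ and $B=(N^b+4N^\gamma)\mathbf{v}_1+4N^\gamma\mathbf{v}_2$ (so the segment $AB$ is vertical with $A$ on the lower and $B$ on the upper side of $C_2$). Let $K=[8N^{2\gamma}]+1$ and divide $AB$ into $K$ equal segments with endpoints $z_0=A,z_1,\dots,z_K=B$. Let $L_i$ be the part of the horizontal line through $z_i$ lying in $C_2$, and let $F_i$ be the parallelogram in $C_2$ between $L_{i-1}$ and $L_i$, $i=1,\dots,K$. Let $t_N=\sqrt2N-6N^\gamma-2N^b$ and $F_i'=F_i+t_N\mathbf{v}_1$. Set $$D_N(\omega)=\max_{1\le i\le K}\omega(\bar F_i)+\max_{1\le j\le K}\omega(\bar F_j'),$$ where $\omega(F)$ is the number of Poisson points in $F$ and $\bar F$ is the closure. Then there is a numerical constant $C$ such that $$\mathbb{P}[D_N(\omega)\ge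 d]\le C(8N^{2\gamma}+1)e^{-d/2}$$ for all $d\ge1$.
   Context: Write $(x,y)\prec(x',y')$ if $x<x'$ and $y<y'$. For $w\prec w'$, an up/right path from $w$ to $w'$ is a sequence of Poisson points $\zeta_1\prec\cdots\prec\zeta_M$ with $w\prec\zeta_1$, $\zeta_M\prec w'$, of length $M$; $d(w,w';\omega)$ is the maximal length, and a maximal path attains it. With $w_N=(N,N)$, $A_N^\gamma$ is the event that every maximal path from $0$ to $w_N$ has all its points in $C(\gamma,N)$, and $\xi=\inf\{\gamma>0\,;\,\liminf_{N\to\infty}\mathbb{P}[A_N^\gamma]=1\}$ (it is a fact that $\xi<1$). $[x]$ denotes the integer part. *)

From HB Require Import structures.
From mathcomp Require Import all_boot all_order all_algebra.
From mathcomp Require Import all_classical all_reals all_analysis.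
Set Implicit Arguments. Unset Strict Implicit. Unset Printing Implicit Defensive.
Import Order.TTheory GRing.Theory Num.Theory.
Import numFieldNormedType.Exports.
Local Open Scope classical_set_scope.
Local Open Scope ring_scope.

Section poisson_lpp.
Variable R : realType.
Notation pt := (R * R)%type.

Definition padd (p q : pt) : pt := (p.1 + q.1, p.2 + q.2).
Definition pscale (a : R) (p : pt) : pt := (a * p.1, a * p.2).
Definition translate (F : set pt) (v : pt) : set pt :=
  [set p | F (padd p (pscale (-1) v))].

(* number of points of a set S (in \bar R, +oo if S is infinite):
   supremum of the sizes of finite duplicate-free lists of elements of S *)
Definition npts (S : set pt) : \bar R :=
  ereal_sup [set ((size s)%:R)%:E | s in [set s : seq pt | uniq s /\ (forall z, z \in s -> S z)]].

Definition leb2 : set pt -> \bar R := (@lebesgue_measure R \x @lebesgue_measure R)%E.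

Definition bounded_borel (A : set pt) : Prop :=
  measurable A /\ exists M : R, forall p, A p -> `|p.1| <= M /\ `|p.2| <= M.

Definition poisson_prob (l : R) (n : nat) : R := l ^+ n / (n`!)%:R * expR (- l).

Definition is_poisson_process (d : measure_display) (T : measurableType d)
    (P : probability T R) (omega : T -> set pt) : Prop :=
  (forall (A : set pt) (n : nat), bounded_borel A ->
      measurable [set t | npts (omega t `&` A) = (n%:R)%:E]) /\
  (forall (k : nat) (A : 'I_k -> set pt) (n : 'I_k -> nat),
      (forall i, bounded_borel (A i)) ->
      (forall i j, i != j -> A i `&` A j = set0) ->
      P [set t | forall i, npts (omega t `&` A i) = ((n i)%:R)%:E] =
      (\prod_(i < k) poisson_prob (fine (leb2 (A i))) (n i))%:E).

Definition prec (p q : pt) : bool := (p.1 < q.1) && (p.2 < q.2).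

Definition up_right_path (S : set pt) (w w' : pt) (s : seq pt) : Prop :=
  path prec w (rcons s w') /\ (forall z, z \in s -> S z).

Definition lpp (S : set pt) (w w' : pt) : \bar R :=
  ereal_sup [set ((size s)%:R)%:E | s in up_right_path S w w'].

Definition maximal_path (S : set pt) (w w' : pt) (s : seq pt) : Prop :=
  up_right_path S w w' s /\ ((size s)%:R)%:E = lpp S w w'.

Definition cyl (gamma N : R) : set pt :=
  [set p | 0 <= p.1 + p.2 <= 2 * N /\
           - (Num.sqrt 2 * N `^ gamma) <= - p.1 + p.2 <= Num.sqrt 2 * N `^ gamma].

Definition wN (N : nat) : pt := (N%:R, N%:R).

Definition event_A (d : measure_display) (T : measurableType d) (omega : T -> set pt)
    (gamma : R) (N : nat) : set T :=
  [set t | forall s, maximal_path (omega t) (0, 0) (wN N) s ->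
                     forall z, z \in s -> cyl gamma N%:R z].

Definition xi (d : measure_display) (T : measurableType d) (P : probability T R)
    (omega : T -> set pt) : R :=
  inf [set gamma : R | 0 < gamma /\
         limn_einf (fun N : nat => P (event_A omega gamma N)) = 1%E].

Definition v1 : pt := (1 / Num.sqrt 2, 1 / Num.sqrt 2).
Definition v2 : pt := (-1 / Num.sqrt 2, 1 / Num.sqrt 2).

Definition mN (gamma N : R) : pt := pscale (3 * N `^ gamma) v2.
Definition C2 (gamma N : R) : set pt := translate (cyl gamma N) (mN gamma N).
Definition ptA (gamma b N : R) : pt :=
  padd (pscale (N `^ b + 2 * N `^ gamma) v1) (pscale (2 * N `^ gamma) v2).
Definition ptB (gamma b N : R) : pt :=
  padd (pscale (N `^ b + 4 * N `^ gamma) v1) (pscale (4 * N `^ gamma) v2).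
Definition KN (gamma N : R) : nat := `|Num.floor (8 * N `^ (2 * gamma))|%N.+1.
Definition zpt (gamma b N : R) (i : nat) : pt :=
  padd (ptA gamma b N)
       (pscale (i%:R / (KN gamma N)%:R)
               (padd (ptB gamma b N) (pscale (-1) (ptA gamma b N)))).
Definition Lline (gamma b N : R) (i : nat) : set pt :=
  [set p | C2 gamma N p /\ p.2 = (zpt gamma b N i).2].
Definition Fpar (gamma b N : R) (i : nat) : set pt :=
  [set p | C2 gamma N p /\ (zpt gamma b N i.-1).2 <= p.2 <= (zpt gamma b N i).2].
Definition tN (gamma b N : R) : R :=
  Num.sqrt 2 * N - 6 * N `^ gamma - 2 * N `^ b.
Definition Fpar' (gamma b N : R) (i : nat) : set pt :=
  translate (Fpar gamma b N i) (pscale (tN gamma b N) v1).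

Definition DN (gamma b N : R) (S : set pt) : \bar R :=
  ((\big[maxe/-oo]_(1 <= i < (KN gamma N).+1) npts (S `&` closure (Fpar gamma b N i))) +
   (\big[maxe/-oo]_(1 <= j < (KN gamma N).+1) npts (S `&` closure (Fpar' gamma b N j))))%E.

End poisson_lpp.

From Pilot Require Import Defs.
From HB Require Import structures.
From mathcomp Require Import all_boot all_order all_algebra.
From mathcomp Require Import all_classical all_reals all_analysis measurable_realfun.
From mathcomp Require Import lra ring.
Set Implicit Arguments. Unset Strict Implicit. Unset Printing Implicit Defensive.
Import Order.TTheory GRing.Theory Num.Theory.
Import numFieldNormedType.Exports.
Local Open Scope classical_set_scope.
Local Open Scope ring_scope.

(* Every cell F_i, and every translate F'_j, is a parallelogram contained in an
   axis-parallel rectangle of height h = 4 N^gamma / (sqrt 2 K) and width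
   h + 2 sqrt 2 N^gamma; since K > 8 N^(2 gamma), this rectangle has area at most 2.
   A Poisson variable X of mean lam <= 2 satisfies the Chernoff bound
   P[X >= m] <= e^(-m) E[e^X] <= e^(2e) e^(-m).  If D_N >= d, one of the 2K counts
   is at least d/2, and the union bound over 2K <= 2 (8 N^(2 gamma) + 1) cells gives
   the claim with C = 2 e^(2e). *)

Section npts.
Variable R : realType.
Local Open Scope ereal_scope.

Lemma npts_ge0 (S : set (R * R)) : 0 <= npts S.
Proof. by apply: ereal_sup_ubound; exists [::]. Qed.

Lemma le_npts (S S' : set (R * R)) : S `<=` S' -> npts S <= npts S'.
Proof.
move=> SS'; apply: ge_ereal_sup => _ [s [us Ss] <-].
by apply: ereal_sup_ubound; exists s => //; split => // z /Ss /SS'.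
Qed.

Lemma npts_nat_or_infty (S : set (R * R)) :
  npts S = +oo \/ exists n : nat, npts S = n%:R%:E.
Proof.
pose lists s := uniq s /\ (forall z, z \in s -> S z).
have [[B HB]|unbounded] :=
    pselect (exists B, forall s, lists s -> (size s <= B)%N); [right|left].
  have ex_size : exists n, `[< exists2 s, lists s & size s = n >].
    by exists 0%N; apply/asboolP; exists [::].
  have ub_size n : `[< exists2 s, lists s & size s = n >] -> (n <= B)%N.
    by move=> /asboolP[s /HB + <-].
  case: (ex_maxnP ex_size ub_size) => m /asboolP[s ls <-] maxm.
  exists (size s); apply/le_anti/andP; split; last by apply: ereal_sup_ubound; exists s.
  apply: ge_ereal_sup => _ [s' ls' <-]; rewrite lee_fin ler_nat.
  by apply: maxm; apply/asboolP; exists s'.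
case E: (npts S) (npts_ge0 S) => [r| |] // _; exfalso; apply: unbounded.
exists (Num.truncn r) => s ls; rewrite -ltnS -(ltr_nat R).
have : (size s)%:R%:E <= npts S by apply: ereal_sup_ubound; exists s.
by rewrite E lee_fin => /le_lt_trans; apply; exact: truncnS_gt.
Qed.

End npts.

Section poisson_tail.
Variable R : realType.

(* Chernoff: for [k >= m], [lam ^ k / k! <= expR (k - m) * lam ^ k / k!],
   and these terms sum to at most [expR (- m) * expR (expR 1 * lam)]. *)
Lemma expR_sub_series_le (m : nat) (lam : R) : 0 <= lam ->
  expR lam - series (exp_coeff lam) m <= expR (- m%:R) * expR (expR 1 * lam).
Proof.
move=> lam0; rewrite lerBlDl.
have elam0 : 0 <= expR 1 * lam by rewrite mulr_ge0 // expR_ge0.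
apply: limr_le; first exact: is_cvg_series_exp_coeff.
exists m => // n /= mn.
rewrite /series /= (big_cat_nat (leq0n m) mn) /= lerD2l.
apply: (@le_trans _ _ (\sum_(m <= k < n) expR (- m%:R) * exp_coeff (expR 1 * lam) k)).
  apply: ler_sum_nat => k /andP[mk _] /=.
  rewrite !exp_coeffE exprMn -expRM_natl mulr1.
  rewrite [X in _ <= X](_ : _ = expR (k%:R - m%:R) * (k`!%:R^-1 * lam ^+ k)); last first.
    by rewrite expRD; ring.
  apply: ler_peMl; first by rewrite mulr_ge0 ?invr_ge0 ?exprn_ge0.
  by rewrite leNgt expR_lt1 subr_lt0 -leNgt ler_nat.
rewrite -big_distrr /=; apply: ler_wpM2l; first exact: expR_ge0.
apply: (@le_trans _ _ (series (exp_coeff (expR 1 * lam)) n)).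
  rewrite /series /= (big_cat_nat (leq0n m) mn) /= lerDr.
  by apply: sumr_ge0 => k _; exact: exp_coeff_ge0.
apply: nondecreasing_cvgn_le; last exact: is_cvg_series_exp_coeff.
by apply: nondecreasing_series => k _ _; exact: exp_coeff_ge0.
Qed.

Lemma poisson_tail_le (lam : R) (m : nat) : 0 <= lam ->
  1 - \sum_(i < m) Defs.poisson_prob lam i <= expR (- m%:R) * expR (expR 1 * lam).
Proof.
move=> lam0.
have -> : \sum_(i < m) Defs.poisson_prob lam i = expR (- lam) * series (exp_coeff lam) m.
  by rewrite /series /= big_mkord mulr_sumr; apply: eq_bigr => i _; rewrite mulrC.
rewrite -{1}(expRxMexpNx_1 lam) [expR lam * _]mulrC -mulrBr.
apply: (le_trans (ler_wpM2l (expR_ge0 _) (@expR_sub_series_le m lam lam0))).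
rewrite ler_piMl ?mulr_ge0 ?expR_ge0 //.
by rewrite expR_le1 oppr_le0.
Qed.

End poisson_tail.

Section union_bounds.
Context (R : realType) (d : measure_display) (T : measurableType d).
Variable mu : {measure set T -> \bar R}.
Local Open Scope ereal_scope.

Lemma measurable_bigmaxe (I : eqType) (s : seq I) (F : I -> T -> \bar R) :
  (forall i, measurable_fun setT (F i)) ->
  measurable_fun setT (fun t => \big[maxe/-oo]_(i <- s) F i t).
Proof.
move=> mF; elim: s => [|i s IHs].
  by under eq_fun do rewrite big_nil; exact: measurable_cst.
by under eq_fun do rewrite big_cons; exact: measurable_maxe.
Qed.

Lemma measure_bigmaxe_ge (n : nat) (X : nat -> T -> \bar R) (r : R) :
  (forall i, measurable_fun setT (X i)) ->
  mu [set t | r%:E <= \big[maxe/-oo]_(i < n) X i t] <=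
  \sum_(i < n) mu [set t | r%:E <= X i t].
Proof.
move=> mX.
have mXge i : measurable [set t | r%:E <= X i t].
  by have := emeasurable_fun_c_infty measurableT (mX i) r%:E; rewrite setTI.
apply: le_trans (Boole_inequality mu (fun i _ => mXge i)).
apply: le_measure; rewrite ?inE.
- have := emeasurable_fun_c_infty measurableT
    (measurable_bigmaxe (index_enum 'I_n) (fun i : 'I_n => mX i)) r%:E.
  by rewrite setTI.
- by apply: bigsetU_measurable => i _.
move=> t /= /bigmax_geP[|[i _ rX]]; first by rewrite leeNy_eq.
by rewrite -(bigcup_mkord n (fun i => [set t | r%:E <= X i t])); exists i => /=.
Qed.

Lemma measure_adde_ge (X Y : T -> \bar R) (r : R) :
  measurable_fun setT X -> measurable_fun setT Y ->
  mu [set t | (r + r)%:E <= X t + Y t] <=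
  mu [set t | r%:E <= X t] + mu [set t | r%:E <= Y t].
Proof.
have mge (Z : T -> \bar R) x : measurable_fun setT Z -> measurable [set t | x <= Z t].
  by move=> mZ; have := emeasurable_fun_c_infty measurableT mZ x; rewrite setTI.
move=> mX mY; apply: le_trans (measureU2 mu (mge _ _ mX) (mge _ _ mY)).
apply: le_measure; rewrite ?inE.
- by apply: (mge (fun t => X t + Y t)); exact: emeasurable_funD.
- by apply: measurableU; exact: mge.
move=> t /= rXY; have [rX|Xr] := leP r%:E (X t); first by left.
have [rY|Yr] := leP r%:E (Y t); first by right.
by have := lt_le_trans (lteD Xr Yr) rXY; rewrite ltxx.
Qed.

End union_bounds.

Section poisson_process.
Context (R : realType) (d : measure_display) (T : measurableType d).
Variables (P : probability T R) (omega : T -> set (R * R)).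
Hypothesis omegaP : is_poisson_process P omega.
Local Open Scope ereal_scope.

Lemma measurable_npts (A : set (R * R)) : bounded_borel A ->
  measurable_fun setT (fun t => npts (omega t `&` A)).
Proof.
move=> bA; set f := fun t => _.
have mf_nat n : measurable [set t | f t = n%:R%:E] by exact: omegaP.1.
have mf_infty : measurable [set t | f t = +oo].
  rewrite (_ : [set t | f t = +oo] = ~` \bigcup_n [set t | f t = n%:R%:E]).
    exact/measurableC/bigcupT_measurable.
  apply/seteqP; split => t /=; first by move=> ft [n _ /=]; rewrite ft.
  case: (npts_nat_or_infty (omega t `&` A)) => // -[n fn] nf.
  by exfalso; apply: nf; exists n.
have mcst (Q : Prop) : measurable [set _ : T | Q].
  have [q|nq] := pselect Q.
    by rewrite (_ : [set _ | Q] = setT) //; apply/seteqP; split.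
  by rewrite (_ : [set _ | Q] = set0) //; apply/seteqP; split.
move=> _ Y _; rewrite setTI.
rewrite (_ : f @^-1` Y = \bigcup_n ([set t | f t = n%:R%:E] `&` [set _ | Y n%:R%:E])
    `|` ([set t | f t = +oo] `&` [set _ | Y +oo])).
  apply: measurableU; last exact: measurableI.
  by apply: bigcupT_measurable => n; exact: measurableI.
apply/seteqP; split => t /=.
  case: (npts_nat_or_infty (omega t `&` A)) => [ft|[n ft]] Yft.
    by right; split; [exact: ft | rewrite -ft].
  by left; exists n => //; split; [exact: ft | rewrite -ft].
by move=> [[n _ [/= -> //]]|[/= -> //]].
Qed.

Lemma measurable_npts_ge (A : set (R * R)) (x : \bar R) : bounded_borel A ->
  measurable [set t | x <= npts (omega t `&` A)].
Proof.
move=> bA; have := emeasurable_fun_c_infty measurableT (measurable_npts bA) x.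
by rewrite setTI.
Qed.

Lemma prob_npts_eq (A : set (R * R)) (n : nat) : bounded_borel A ->
  P [set t | npts (omega t `&` A) = n%:R%:E] = (Defs.poisson_prob (fine (leb2 A)) n)%:E.
Proof.
move=> bA; have := omegaP.2 1%N (fun _ => A) (fun _ => n) (fun _ => bA).
rewrite big_ord1 => <-; last by move=> i j; rewrite !ord1 eqxx.
by congr (P _); apply/seteqP; split => t /=; [move=> ? | move/(_ ord0)].
Qed.

Lemma prob_npts_ge_nat (A : set (R * R)) (m : nat) : bounded_borel A ->
  P [set t | m%:R%:E <= npts (omega t `&` A)] <=
  (expR (- m%:R) * expR (expR 1 * fine (leb2 A)))%:E.
Proof.
move=> bA; set E := fun i : nat => [set t | npts (omega t `&` A) = i%:R%:E].
have -> : [set t | m%:R%:E <= npts (omega t `&` A)] = ~` \big[setU/set0]_(i < m) E i.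
  rewrite -bigcup_mkord; apply/seteqP; split => t /=.
    by move=> + [i /= im Ei]; rewrite Ei lee_fin ler_nat leqNgt im.
  case: (npts_nat_or_infty (omega t `&` A)) => [-> _|[n En] nE]; first exact: leey.
  by rewrite En lee_fin ler_nat leqNgt; apply/negP => nm; apply: nE; exists n.
have mE i : measurable (E i) by exact: omegaP.1.
rewrite probability_setC; last exact: bigsetU_measurable.
have disjE : trivIset [set: 'I_m] (fun i : 'I_m => E i).
  move=> i j _ _ [t [Ei Ej]]; apply/val_inj/eqP.
  by rewrite -(eqr_nat R) -(inj_eq (@EFin_inj R)); apply/eqP; exact: etrans (esym Ei) Ej.
rewrite (measure_bigsetU_ord P xpredT (fun i : 'I_m => mE i) disjE).
rewrite (eq_bigr (fun i : 'I_m => (Defs.poisson_prob (fine (leb2 A)) i)%:E)) => [|i _];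
  last exact: prob_npts_eq.
rewrite sumEFin -EFinB lee_fin; apply: poisson_tail_le.
by apply: fine_ge0; exact: measure_ge0.
Qed.

Lemma prob_npts_ge (A : set (R * R)) (r : R) : bounded_borel A -> (0 <= r)%R ->
  P [set t | r%:E <= npts (omega t `&` A)] <=
  (expR (- r) * expR (expR 1 * fine (leb2 A)))%:E.
Proof.
move=> bA r0; set m := `|Num.ceil r|%N.
have ceil0 : (0 <= Num.ceil r)%R by rewrite ceil_ge0 (lt_le_trans _ r0).
have r_le_m : (r <= m%:R)%R by rewrite natr_absz ger0_norm // ceil_ge.
apply: (@le_trans _ _ (P [set t | m%:R%:E <= npts (omega t `&` A)])).
  apply: le_measure; rewrite ?inE; try exact: measurable_npts_ge.
  move=> t /=; case: (npts_nat_or_infty (omega t `&` A)) => [-> _|[n ->]].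
    exact: leey.
  rewrite !lee_fin ler_nat => rn.
  by rewrite -(ler_nat R) natr_absz ger0_norm // -[n%:R]/(n%:Z%:~R) ler_int ceil_le_int.
apply: le_trans (prob_npts_ge_nat m bA) _.
by rewrite lee_fin ler_wpM2r ?expR_ge0 // ler_expR lerN2.
Qed.

Lemma le_prob_npts_ge (A B : set (R * R)) (x : \bar R) :
  bounded_borel A -> bounded_borel B -> A `<=` B ->
  P [set t | x <= npts (omega t `&` A)] <= P [set t | x <= npts (omega t `&` B)].
Proof.
move=> bA bB AB; apply: le_measure; rewrite ?inE; try exact: measurable_npts_ge.
by move=> t /= xA; apply: (le_trans xA); apply: le_npts; exact: setIS.
Qed.

End poisson_process.

Section polygons.
Variable R : realType.
Local Notation pt := (R * R)%type.

Definition affine (h : R * R * R) (p : pt) : R := h.1.1 * p.1 + h.1.2 * p.2 + h.2.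

Definition polygon (s : seq (R * R * R)) : set pt :=
  [set p | all (fun h => 0 <= affine h p) s].

Lemma polygon_nil : polygon [::] = setT.
Proof. by apply/seteqP. Qed.

Lemma polygon_cons h s : polygon (h :: s) = [set p | 0 <= affine h p] `&` polygon s.
Proof. by apply/seteqP; split => p /= /andP. Qed.

Lemma continuous_affine h : continuous (affine h).
Proof.
move=> p; apply: cvgD; last exact: cvg_cst.
by apply: cvgD; apply: cvgMr; [exact: cvg_fst | exact: cvg_snd].
Qed.

Lemma measurable_affine h : measurable_fun setT (affine h).
Proof.
by apply: measurable_funD => //; apply: measurable_funD; apply: measurable_funM.
Qed.

Lemma closed_polygon s : closed (polygon s).
Proof.
elim: s => [|h s IHs]; first by rewrite polygon_nil; exact: closedT.
rewrite polygon_cons; apply: closedI IHs.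
exact: (continuous_closedP _).1 (@continuous_affine h) _ (@closed_ge _ 0).
Qed.

Lemma measurable_polygon s : measurable (polygon s).
Proof.
elim: s => [|h s IHs]; first by rewrite polygon_nil.
rewrite polygon_cons; apply: measurableI IHs.
rewrite (_ : [set p | _] = affine h @^-1` `[0, +oo[%classic); last first.
  by apply/seteqP; split => p /=; rewrite in_itv /= andbT.
by rewrite -[X in measurable X]setTI; exact: measurable_affine.
Qed.

Definition shift_affine (v : pt) (h : R * R * R) : R * R * R :=
  (h.1, h.2 - h.1.1 * v.1 - h.1.2 * v.2).

Lemma translate_polygon s v :
  translate (polygon s) v = polygon (map (shift_affine v) s).
Proof.
elim: s => [|h s IHs]; first by rewrite !polygon_nil; apply/seteqP.
rewrite /= !polygon_cons -IHs; apply/seteqP; split => p [hp sp]; split => //=;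
  by move: hp; rewrite /affine /padd /pscale /=; congr (_ <= _); ring.
Qed.

End polygons.

Section rectangles.
Variable R : realType.
Local Notation pt := (R * R)%type.

Definition rectangle (x0 y0 w h : R) : set pt :=
  `[x0, x0 + w]%classic `*` `[y0, y0 + h]%classic.

Lemma measurable_rectangle x0 y0 w h : measurable (rectangle x0 y0 w h).
Proof. by apply: measurableX; exact: measurable_itv. Qed.

Lemma leb2_rectangle x0 y0 w h : 0 <= w -> 0 <= h ->
  leb2 (rectangle x0 y0 w h) = (w * h)%:E.
Proof.
move=> w0 h0; rewrite /leb2 product_measure1E; try exact: measurable_itv.
have leb_itv (a l : R) : 0 <= l -> (@lebesgue_measure R) `[a, a + l]%classic = l%:E.
  move=> l0; rewrite lebesgue_measure_itv /= lte_fin.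
  have [_|la] := ltrP a (a + l); first by rewrite -EFinD; congr (_%:E); ring.
  by have -> : l = 0 by lra.
by rewrite EFinM; congr (_ * _)%E; exact: leb_itv.
Qed.

Lemma translate_rectangle x0 y0 w h v :
  translate (rectangle x0 y0 w h) v = rectangle (x0 + v.1) (y0 + v.2) w h.
Proof.
apply/seteqP; split => p; rewrite /translate /rectangle /padd /pscale /= !in_itv /=;
  by case=> /andP[? ?] /andP[? ?]; split; apply/andP; split; lra.
Qed.

Lemma bounded_borel_sub_rectangle (A : set pt) x0 y0 w h :
  measurable A -> A `<=` rectangle x0 y0 w h -> bounded_borel A.
Proof.
move=> mA Asub; split => //.
exists (`|x0| + `|w| + `|y0| + `|h|) => p /Asub [/=]; rewrite !in_itv /=.
move=> /andP[? ?] /andP[? ?].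
have bound (x : R) : - `|x| <= x <= `|x| by rewrite -ler_norml.
move: (bound x0) (bound w) (bound y0) (bound h).
move=> /andP[? ?] /andP[? ?] /andP[? ?] /andP[? ?].
by rewrite !ler_norml; split; apply/andP; split; lra.
Qed.

End rectangles.

Section cells.
Variables (R : realType) (gamma b N : R).
Local Notation K := (KN gamma N).
Local Notation g := (N `^ gamma).

Lemma KN_floor : K%:R = (Num.floor (8 * N `^ (2 * gamma)) + 1)%:~R :> R.
Proof.
rewrite /KN -(@natr1 R `|Num.floor (8 * N `^ (2 * gamma))|%N) natr_absz ger0_norm ?intrD //.
by rewrite floor_ge0 mulr_ge0 ?powR_ge0.
Qed.

Lemma KN_gt : 8 * g ^+ 2 < K%:R.
Proof.
by rewrite KN_floor -powR_mulrn ?powR_ge0 // -powRrM [gamma * _]mulrC floorD1_gt.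
Qed.

Lemma KN_le : K%:R <= 8 * N `^ (2 * gamma) + 1.
Proof. by rewrite KN_floor intrD lerD2r floor_le. Qed.

Definition cell_height : R := 4 * g / (Num.sqrt 2 * K%:R).
Definition cell_width : R := cell_height + 2 * Num.sqrt 2 * g.

Lemma cell_height_ge0 : 0 <= cell_height.
Proof. by rewrite divr_ge0 ?mulr_ge0 ?powR_ge0 ?sqrtr_ge0. Qed.

Lemma cell_width_ge0 : 0 <= cell_width.
Proof. by rewrite addr_ge0 ?cell_height_ge0 ?mulr_ge0 ?powR_ge0 ?sqrtr_ge0. Qed.

Lemma cell_area_le2 : cell_width * cell_height <= 2.
Proof.
have s0 : 0 < Num.sqrt 2 :> R by rewrite sqrtr_gt0.
have ss : Num.sqrt 2 * Num.sqrt 2 = 2 :> R by rewrite -expr2 sqr_sqrtr.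
have K0 : 0 < K%:R :> R by rewrite ltr0n.
have K1 : 1 <= K%:R :> R by rewrite ler1n.
set u := 8 * g ^+ 2 / K%:R.
have u1 : u <= 1 by rewrite ler_pdivrMr // mul1r ltW ?KN_gt.
have u0 : 0 <= u by rewrite divr_ge0 ?mulr_ge0 ?exprn_ge0 ?powR_ge0 ?ltW.
have uK : u / K%:R <= u by rewrite ler_pdivrMr // ler_peMr.
have -> : cell_width * cell_height =
    16 * g ^+ 2 / (Num.sqrt 2 * Num.sqrt 2 * K%:R ^+ 2) + u.
  by rewrite /cell_width /cell_height /u; field; rewrite !gt_eqF.
have -> : 16 * g ^+ 2 / (Num.sqrt 2 * Num.sqrt 2 * K%:R ^+ 2) = u / K%:R.
  by rewrite ss /u; field; rewrite gt_eqF.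
lra.
Qed.

Lemma zpt_step i : (zpt gamma b N i.+1).2 = (zpt gamma b N i).2 + cell_height.
Proof.
rewrite /zpt /ptA /ptB /padd /pscale /v1 /v2 /cell_height /= -natr1.
by field; rewrite !gt_eqF ?sqrtr_gt0 ?ltr0n.
Qed.

Definition Fpar_sides (i : nat) : seq (R * R * R) :=
  let m := mN gamma N in let w := Num.sqrt 2 * g in
  [:: (1, 1, - (m.1 + m.2)); (-1, -1, 2 * N + (m.1 + m.2));
      (-1, 1, w + m.1 - m.2); (1, -1, w - m.1 + m.2);
      (0, 1, - (zpt gamma b N i.-1).2); (0, -1, (zpt gamma b N i).2)].

Lemma Fpar_polygon i : Fpar gamma b N i = polygon (Fpar_sides i).
Proof.
apply/seteqP; split => p;
  rewrite /Fpar /C2 /translate /cyl /polygon /affine /padd /pscale /= ?andbT.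
  by case=> -[/andP[? ?] /andP[? ?]] /andP[? ?]; repeat (apply/andP; split); lra.
by move=> /and5P[? ? ? ? /andP[? ?]]; split; [split|]; apply/andP; split; lra.
Qed.

Lemma Fpar_sub_rectangle i :
  let m := mN gamma N in let y0 := (zpt gamma b N i).2 in
  Fpar gamma b N i.+1 `<=`
    rectangle (y0 + m.1 - m.2 - Num.sqrt 2 * g) y0 cell_width cell_height.
Proof.
move=> m y0 p; rewrite Fpar_polygon /Fpar_sides zpt_step [i.+1.-1]/= -/y0 -/m.
rewrite /polygon /affine /cell_width /= => /and5P[? ? ? ? /andP[? ?]].
by split; rewrite /= in_itv /=; apply/andP; split; lra.
Qed.

Definition is_cell (A : set (R * R)) : Prop :=
  [/\ closed A, measurable A &
      exists x0 y0, A `<=` rectangle x0 y0 cell_width cell_height].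

Lemma is_cell_Fpar i : is_cell (Fpar gamma b N i.+1).
Proof.
split; [rewrite Fpar_polygon; exact: closed_polygon |
        rewrite Fpar_polygon; exact: measurable_polygon |].
by do 2 eexists; exact: Fpar_sub_rectangle.
Qed.

Lemma is_cell_Fpar' i : is_cell (Fpar' gamma b N i.+1).
Proof.
rewrite /Fpar' Fpar_polygon translate_polygon; split;
  [exact: closed_polygon | exact: measurable_polygon |].
have [_ _ [x0 [y0 Fsub]]] := is_cell_Fpar i.
rewrite -translate_polygon -Fpar_polygon; set v := pscale _ _.
by exists (x0 + v.1), (y0 + v.2); rewrite -translate_rectangle => p; exact: Fsub.
Qed.

Lemma DN_bigmaxe_ord (S : set (R * R)) : DN gamma b N S =
  ((\big[maxe/-oo]_(i < K) npts (S `&` closure (Fpar gamma b N i.+1))) +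
   (\big[maxe/-oo]_(i < K) npts (S `&` closure (Fpar' gamma b N i.+1))))%E.
Proof. by rewrite /DN !big_add1 /= !big_mkord. Qed.

End cells.

Section cell_counts.
Context (R : realType) (d : measure_display) (T : measurableType d).
Variables (P : probability T R) (omega : T -> set (R * R)).
Hypothesis omegaP : is_poisson_process P omega.
Local Open Scope ereal_scope.

Lemma prob_npts_ge_rectangle (A : set (R * R)) x0 y0 w h (r : R) :
  measurable A -> A `<=` rectangle x0 y0 w h ->
  (0 <= w)%R -> (0 <= h)%R -> (w * h <= 2)%R -> (0 <= r)%R ->
  P [set t | r%:E <= npts (omega t `&` A)] <= (expR (2 * expR 1) * expR (- r))%:E.
Proof.
move=> mA Asub w0 h0 wh2 r0.
have bB := bounded_borel_sub_rectangle (measurable_rectangle x0 y0 w h) (@subset_refl _ _).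
apply: le_trans (le_prob_npts_ge omegaP _ (bounded_borel_sub_rectangle mA Asub) bB Asub) _.
apply: le_trans (prob_npts_ge omegaP bB r0) _.
rewrite leb2_rectangle //= lee_fin mulrC ler_wpM2r ?expR_ge0 // ler_expR.
by rewrite mulrC ler_wpM2r ?expR_ge0.
Qed.

Variables (gamma N : R).

Lemma measurable_npts_cell (A : set (R * R)) : is_cell gamma N A ->
  measurable_fun setT (fun t => npts (omega t `&` closure A)).
Proof.
move=> [cA mA [x0 [y0 Asub]]]; rewrite -(closure_id A).1 //.
by apply: (measurable_npts omegaP); exact: bounded_borel_sub_rectangle mA Asub.
Qed.

Lemma prob_npts_cell_ge (A : set (R * R)) (r : R) : is_cell gamma N A -> (0 <= r)%R ->
  P [set t | r%:E <= npts (omega t `&` closure A)] <=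
  (expR (2 * expR 1) * expR (- r))%:E.
Proof.
move=> [cA mA [x0 [y0 Asub]]] r0; rewrite -(closure_id A).1 //.
apply: prob_npts_ge_rectangle Asub _ _ _ r0 => //.
- exact: cell_width_ge0.
- exact: cell_height_ge0.
- exact: cell_area_le2.
Qed.

Lemma measurable_bigmaxe_cells n (F : nat -> set (R * R)) :
  (forall i, is_cell gamma N (F i)) ->
  measurable_fun setT (fun t => \big[maxe/-oo]_(i < n) npts (omega t `&` closure (F i))).
Proof. by move=> cF; apply: measurable_bigmaxe => i; exact: measurable_npts_cell. Qed.

Lemma prob_bigmaxe_cells_ge n (F : nat -> set (R * R)) (r : R) :
  (forall i, is_cell gamma N (F i)) -> (0 <= r)%R ->
  P [set t | r%:E <= \big[maxe/-oo]_(i < n) npts (omega t `&` closure (F i))] <=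
  (n%:R * (expR (2 * expR 1) * expR (- r)))%:E.
Proof.
move=> cF r0; set c := (expR _ * _)%R.
apply: le_trans (measure_bigmaxe_ge P n r (fun i => measurable_npts_cell (cF i))) _.
have -> : (n%:R * c)%:E = \sum_(i < n) c%:E.
  by rewrite sumEFin sumr_const card_ord mulr_natl.
by apply: lee_sum => i _; exact: prob_npts_cell_ge.
Qed.

End cell_counts.

Theorem lemma2p1 (R : realType) :
  exists C : R, forall (dsp : measure_display) (T : measurableType dsp)
    (P : probability T R) (omega : T -> set (R * R)),
    is_poisson_process P omega ->
    forall (gamma b : R) (N : nat) (d : R),
      xi P omega < gamma -> gamma < 1 ->
      gamma < b -> b < 1 ->
      0 < N%:R `^ b - 4 * N%:R `^ gamma ->
      1 <= d ->
      (P [set t | d%:E <= DN gamma b N%:R (omega t)] <=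
        (C * (8 * N%:R `^ (2 * gamma) + 1) * expR (- d / 2))%:E)%E.
Proof.
exists (2 * expR (2 * expR 1)) => dsp T P omega omegaP gamma b N d _ _ _ _ _ d1.
set r := d / 2; have r0 : 0 <= r by rewrite /r; lra.
have cellF i : is_cell gamma N%:R (Fpar gamma b N%:R i.+1) by exact: is_cell_Fpar.
have cellF' i : is_cell gamma N%:R (Fpar' gamma b N%:R i.+1) by exact: is_cell_Fpar'.
rewrite (_ : d = r + r); last by rewrite /r; field.
under eq_set do rewrite DN_bigmaxe_ord.
apply: le_trans (measure_adde_ge P r (measurable_bigmaxe_cells omegaP _ cellF)
                                     (measurable_bigmaxe_cells omegaP _ cellF')) _.
apply: le_trans (leeD (prob_bigmaxe_cells_ge omegaP _ cellF r0)
                      (prob_bigmaxe_cells_ge omegaP _ cellF' r0)) _.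
rewrite -EFinD lee_fin (_ : - (r + r) / 2 = - r); last by field.
have c0 : 0 <= expR (2 * expR 1) * expR (- r) :> R by rewrite mulr_ge0 ?expR_ge0.
rewrite -mulrDl [X in _ <= X](_ : _ = 2 * (8 * N%:R `^ (2 * gamma) + 1) *
  (expR (2 * expR 1) * expR (- r))); last by ring.
by rewrite ler_wpM2r //; have := KN_le gamma N%:R; lra.
Qed.
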